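(* Let $\mathcal{L}$ be a nonempty set and $\mathcal{C}: 2^{\mathcal{L}}\to 2^{\mathcal{L}}$ an L-logics. Then the relation $<^{+}$ on theories is irreflexive, and hence a strict partial order.
   Context: An L-logics is a map $\mathcal{C}: 2^{\mathcal{L}}\to 2^{\mathcal{L}}$ satisfying Inclusion ($A\subseteq\mathcal{C}(A)$ for all $A$) and Loop: for every $n\ge1$ and $A_0,\dots,A_{n-1}\subseteq\mathcal{L}$, if $A_i\subseteq\mathcal{C}(A_{i+1})$ for all $i=0,\dots,n-1$ (indices mod $n$) then $\mathcal{C}(A_0)=\mathcal{C}(A_1)$. A theory is a set $T\subseteq\mathcal{L}$ with $\mathcal{C}(T)=T$. For theories $T,S$: $T\le S$ iff there is $A\subseteq S$ with $\mathcal{C}(A)=T$; $T<S$ iff $T\le S$ and $S\not\le T$. $<^{+}$ is the transitive closure of $<$ on the set of theories. *)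

From Stdlib Require Import Relations.Relation_Operators.

Definition subset {L : Type} (A B : L -> Prop) : Prop := forall x, A x -> B x.
Definition seteq {L : Type} (A B : L -> Prop) : Prop := forall x, A x <-> B x.

(* An L-logics: Inclusion + Loop (indices mod n). *)
Definition L_logic {L : Type} (C : (L -> Prop) -> (L -> Prop)) : Prop :=
  (forall A, subset A (C A)) /\
  (forall (n : nat) (A : nat -> (L -> Prop)), 1 <= n ->
     (forall i, i < n -> subset (A i) (C (A (Nat.modulo (S i) n)))) ->
     seteq (C (A 0)) (C (A (Nat.modulo 1 n)))).

Definition theory {L : Type} (C : (L -> Prop) -> (L -> Prop)) (T : L -> Prop) : Prop :=
  seteq (C T) T.

Definition th_le {L : Type} (C : (L -> Prop) -> (L -> Prop)) (T S : L -> Prop) : Prop :=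
  exists A, subset A S /\ seteq (C A) T.

Definition th_lt {L : Type} (C : (L -> Prop) -> (L -> Prop)) (T S : L -> Prop) : Prop :=
  theory C T /\ theory C S /\ th_le C T S /\ ~ th_le C S T.

Definition th_lt_plus {L : Type} (C : (L -> Prop) -> (L -> Prop)) : (L -> Prop) -> (L -> Prop) -> Prop :=
  clos_trans (L -> Prop) (th_lt C).

From Stdlib Require Import Relations.Relation_Operators Relations.Operators_Properties Lia Arith.

(* Suppose T_0 < T_1 < ... < T_n = T_0, and pick witnesses A_i included in
   T_(i+1) with C(A_i) = T_i.  Then A_i is included in C(A_(i+1)) cyclically,
   so Loop gives T_0 = C(A_0) = C(A_1) = T_1.  As T_1 is a theory, T_1 is then
   generated by a subset of T_0 (itself), i.e. T_1 <= T_0, contradicting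
   T_0 < T_1. *)

Section LLogic.

Variables (L : Type) (C : (L -> Prop) -> (L -> Prop)).

Lemma seteq_sym (A B : L -> Prop) : seteq A B -> seteq B A.
Proof. intros H x; symmetry; apply H. Qed.

Lemma seteq_trans (A B D : L -> Prop) : seteq A B -> seteq B D -> seteq A D.
Proof. intros HAB HBD x; rewrite (HAB x); apply HBD. Qed.

Lemma subset_seteqr (A B D : L -> Prop) : subset A B -> seteq B D -> subset A D.
Proof. intros HAB HBD x Hx; apply HBD, HAB, Hx. Qed.

Lemma th_le_of_seteq (T S : L -> Prop) : theory C T -> seteq T S -> th_le C T S.
Proof.
  intros HT HTS; exists T; split.
  - intros x Hx; apply HTS, Hx.
  - exact HT.
Qed.

Lemma th_lt_not_seteq (T S : L -> Prop) : th_lt C T S -> ~ seteq T S.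
Proof.
  intros (_ & HS & _ & HnotST) HTS.
  apply HnotST, th_le_of_seteq; [exact HS | exact (seteq_sym _ _ HTS)].
Qed.

Definition le_chain (n : nat) (f A : nat -> L -> Prop) : Prop :=
  forall i, i < n -> subset (A i) (f (S i)) /\ seteq (C (A i)) (f i).

Definition scons (x : L -> Prop) (f : nat -> L -> Prop) (i : nat) : L -> Prop :=
  match i with 0 => x | S j => f j end.

Lemma le_chain_cons (n : nat) (f A : nat -> L -> Prop) (x B : L -> Prop) :
  le_chain n f A -> subset B (f 0) -> seteq (C B) x ->
  le_chain (S n) (scons x f) (scons B A).
Proof.
  intros Hchain HB HCB [|i] Hi; [now split | apply Hchain; lia].
Qed.

Lemma le_chain_of_rt (T U : L -> Prop) :
  clos_refl_trans_1n _ (th_lt C) T U ->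
  exists n f A, f 0 = T /\ f n = U /\ le_chain n f A.
Proof.
  induction 1 as [T | T S U HTS _ (n & f & A & Hf0 & Hfn & Hchain)].
  - exists 0, (fun _ => T), (fun _ => T).
    split; [reflexivity | split; [reflexivity | intros i Hi; lia]].
  - destruct HTS as (_ & _ & (B & HBS & HCB) & _).
    subst S; exists (S n), (scons T f), (scons B A).
    split; [reflexivity | split; [exact Hfn | exact (le_chain_cons n f A T B Hchain HBS HCB)]].
Qed.

Lemma th_lt_plus_first_step (T U : L -> Prop) :
  th_lt_plus C T U ->
  exists S, th_lt C T S /\ clos_refl_trans_1n _ (th_lt C) S U.
Proof.
  intros HTU; apply clos_trans_t1n in HTU.
  destruct HTU as [U HTU | S U HTS HSU].
  - exists U; split; [exact HTU | constructor].
  - exists S; split; [exact HTS |].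
    apply clos_rt_rt1n, clos_t_clos_rt, clos_t1n_trans, HSU.
Qed.

Section Cycle.

Variables (n : nat) (f A : nat -> L -> Prop).
Hypotheses (Hchain : le_chain (S n) f A) (Hcycle : f (S n) = f 0).

Lemma cycle_next_seteq (i : nat) :
  i < S n -> seteq (f (S i)) (C (A (S i mod S n))).
Proof.
  intros Hi; destruct (Nat.eq_dec (S i) (S n)) as [Hlast | Hinner].
  - rewrite Hlast, Nat.Div0.mod_same, Hcycle.
    apply seteq_sym, Hchain; lia.
  - rewrite Nat.mod_small by lia.
    apply seteq_sym, Hchain; lia.
Qed.

Lemma le_cycle_collapse : L_logic C -> seteq (f 0) (f 1).
Proof.
  intros [_ Loop].
  assert (Hloop : seteq (C (A 0)) (C (A (1 mod S n)))).
  { apply Loop; [lia |].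
    intros i Hi; eapply subset_seteqr; [apply Hchain, Hi | apply cycle_next_seteq, Hi]. }
  eapply seteq_trans; [apply seteq_sym, Hchain; lia |].
  eapply seteq_trans; [exact Hloop |].
  apply seteq_sym, cycle_next_seteq; lia.
Qed.

End Cycle.

Lemma th_lt_plus_irrefl (T : L -> Prop) : L_logic C -> ~ th_lt_plus C T T.
Proof.
  intros HC HTT.
  destruct (th_lt_plus_first_step T T HTT) as (S & HTS & HST).
  destruct (le_chain_of_rt S T HST) as (n & f & A & Hf0 & Hfn & Hchain).
  apply (th_lt_not_seteq T S HTS).
  destruct HTS as (_ & _ & (B & HBS & HCB) & _).
  rewrite <- Hf0 in HBS |- *.
  apply (le_cycle_collapse n (scons T f) (scons B A)); [| exact Hfn | exact HC].
  exact (le_chain_cons n f A T B Hchain HBS HCB).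
Qed.

End LLogic.

Theorem lemma19 (L : Type) (x0 : L) (C : (L -> Prop) -> (L -> Prop)) :
  L_logic C ->
  (forall T, theory C T -> ~ th_lt_plus C T T) /\
  (forall T S U, th_lt_plus C T S -> th_lt_plus C S U -> th_lt_plus C T U).
Proof.
  intros HC; split.
  - intros T _; exact (th_lt_plus_irrefl L C T HC).
  - intros T S U; apply t_trans.
Qed.
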